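(* For every $m\geqslant4$, $$\left|\mathcal{D}_m-\frac12\cdot\frac{1}{2\uparrow\uparrow m}\right|\leqslant\frac{3}{3^{2\uparrow\uparrow(m-1)}}.$$
   Context: $H(n)$ is the height of the factorization tree of $n\geqslant1$: $H(1)=0$ and, for $n=p_1^{\alpha_1}\cdots p_k^{\alpha_k}>1$ with distinct primes $p_i$, $H(n)=1+\max_i H(\alpha_i)$. Tetration: $a\uparrow\uparrow0=1$, $a\uparrow\uparrow b=a^{a\uparrow\uparrow(b-1)}$. $\mathcal{D}_m$ denotes the natural density of the set $\{n\geqslant 1: H(n)=m\}$, i.e. $\mathcal{D}_m=\lim_{x\to\infty}\frac1x\#\{n\leqslant x:H(n)=m\}$ (which exists). *)

From mathcomp Require Import all_boot.
From Stdlib Require Import Reals.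

Set Implicit Arguments.
Unset Strict Implicit.
Unset Printing Implicit Defensive.

(* Height of the factorization tree, computed with fuel.  Since logn p n < n, fuel n is enough. *)
Fixpoint Hfuel (k n : nat) : nat :=
  match k with
  | 0 => 0
  | k'.+1 => if n <= 1 then 0
             else (\max_(p <- primes n) Hfuel k' (logn p n)).+1
  end.

Definition H (n : nat) : nat := Hfuel n n.

Fixpoint tetr (a b : nat) : nat :=
  match b with
  | 0 => 1
  | b'.+1 => a ^ (tetr a b')
  end.

Definition countH (m N : nat) : nat := count (fun n => H n == m) (iota 1 N).

(* The natural density D_m is the limit of countH m N / N as N -> oo. *)
Definition density_seq (m : nat) : nat -> R :=
  fun N => (INR (countH m N) / INR N)%R.

(* A number has height at least k+2 exactly when one of its prime exponents
   has height at least k+1, and 2↑↑j is the least number of height at least j.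
   So whether H n = m (m >= 2) is decided by the prime exponents of n that are
   at least 2, and these are controlled outside sets of small density.
   - If no d > P has d^2 | n, then n and gcd(n, P!^(2P)) have the same prime
     exponents except for exponents at most 1.  Hence H n = m agrees with a
     periodic condition outside a set of density at most sum_(d > P) 1/d^2 <= 1/P,
     and letting P grow shows that the density D_m exists.
   - Let a = 2↑↑(m-1).  If no d >= 3 has d^a | n, only the exponent of 2 can
     reach height m-1, so H n = m exactly when 2^a exactly divides n, a condition
     of density 1/2^(a+1) = 1/(2 * 2↑↑m); the exceptional set has density at most
     sum_(d >= 3) 1/d^a <= 3/3^a. *)

From mathcomp Require Import all_boot zify.
From Stdlib Require Import Reals Lra Lia.
(* [Reals] rebinds [^] on [nat] to [Nat.pow]; restore ssrnat's [expn]. *)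
Import ssrnat.

Set Implicit Arguments.
Unset Strict Implicit.
Unset Printing Implicit Defensive.

Lemma Hfuel_enough k1 k2 n : n <= k1 -> n <= k2 -> Hfuel k1 n = Hfuel k2 n.
Proof.
elim: k1 k2 n => [|k1 IH] [|k2] n //=; rewrite ?leqn0.
- by move=> /eqP ->.
- by move=> _ /eqP ->.
move=> n_k1 n_k2; case: ifP => // n_gt1; congr S; apply: eq_bigr => p _.
have lt_log := @ltn_logl p n; apply: IH; lia.
Qed.

Lemma H_rec n :
  H n = if n <= 1 then 0 else (\max_(p <- primes n) H (logn p n)).+1.
Proof.
rewrite /H; case: n => [|n] //=; case: ifP => // _; congr S.
apply: eq_bigr => p _; apply: Hfuel_enough => //.
by have := @ltn_logl p n.+1 isT; lia.
Qed.

Lemma H_small n : n <= 1 -> H n = 0.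
Proof. by case: n => [|[|]]. Qed.

Lemma ltn_bigmax_seq (F : nat -> nat) s k :
  (k < \max_(i <- s) F i) = has (fun i => k < F i) s.
Proof. by elim: s => [|i s IH]; rewrite ?big_nil // big_cons leq_max IH. Qed.

Lemma H_geSS k n :
  k.+2 <= H n <-> exists2 p, prime p & k.+1 <= H (logn p n).
Proof.
rewrite H_rec; case: ifP => [n_le1|n_gt1].
  split=> // -[p _]; rewrite H_small //.
  by case: n n_le1 => [|[|]] //; rewrite ?logn0 ?logn1.
rewrite ltnS ltn_bigmax_seq; split=> [/hasP[p]|[p p_pr k_lt]].
  by rewrite mem_primes => /andP[p_pr _]; exists p.
apply/hasP; exists p => //; rewrite -logn_gt0.
by case: (logn p n) k_lt.
Qed.

Lemma H_exp2 x : 0 < x -> H (2 ^ x) = (H x).+1.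
Proof.
move=> x_gt0; rewrite H_rec ifN; last by rewrite -ltnNge -{1}(expn0 2) ltn_exp2l.
by rewrite primesX // primes_prime // big_seq1 pfactorK.
Qed.

Lemma tetrS a b : tetr a b.+1 = a ^ tetr a b.
Proof. by rewrite /=; elim: (tetr a b) => //= e ->; rewrite expnS. Qed.

Lemma tetr2_gt0 j : 0 < tetr 2 j.
Proof. by case: j => // j; rewrite tetrS expn_gt0. Qed.

Lemma tetr2_ge2 j : 2 <= tetr 2 j.+1.
Proof. by rewrite tetrS -{1}(expn1 2) leq_exp2l // tetr2_gt0. Qed.

Lemma H_tetr2 j : H (tetr 2 j) = j.
Proof. by elim: j => // j IH; rewrite tetrS H_exp2 ?IH // tetr2_gt0. Qed.

Lemma tetr2_leq_of_H_gt j v : j < H v -> tetr 2 j.+1 <= v.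
Proof.
have v_gt1 w : 0 < H w -> 1 < w by case: w => [|[|]].
elim: j v => [|j IH] v j_lt; first exact: v_gt1.
have v_gt0 : 0 < v by have := v_gt1 v; lia.
case/H_geSS: j_lt => p p_pr /IH tetr_le_log.
rewrite tetrS; apply: leq_trans (dvdn_leq v_gt0 (pfactor_dvdnn p v)).
apply: (@leq_trans (2 ^ logn p v)); first by rewrite leq_exp2l.
by rewrite leq_exp2r ?prime_gt1 //; have := tetr2_gt0 j.+1; lia.
Qed.

Lemma double_leq_exp2 x : 2 * x <= 2 ^ x.
Proof. by case: x => // x; rewrite expnS leq_mul2l ltn_expl. Qed.

Lemma double_exp2_leq_exp3 b : 2 <= b -> 2 * 2 ^ b <= 3 ^ b.
Proof.
elim: b => // b IH; rewrite leq_eqVlt => /orP[/eqP <- // | b_ge2].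
by rewrite !expnS; have := IH b_ge2; lia.
Qed.

Lemma H_gap j v : j.+1 < H v -> v = tetr 2 j.+2 \/ 2 * tetr 2 j.+2 <= v.
Proof.
move=> j_lt; have v_gt0 : 0 < v by case: v j_lt.
case/H_geSS: j_lt => p p_pr /tetr2_leq_of_H_gt t_le_log.
have t_ge2 := tetr2_ge2 j; rewrite tetrS; set t := tetr 2 j.+1 in t_le_log t_ge2 *.
have pt_dvd : p ^ t %| v by rewrite pfactor_dvdn.
have [p_eq2|p_ne2] := eqVneq p 2.
  rewrite {}p_eq2 in pt_dvd.
  case/dvdnP: pt_dvd v_gt0 => [[|[|w]] ->] //; first by left; rewrite mul1n.
  by right; rewrite leq_mul2r; apply/orP; right.
right; apply: leq_trans (dvdn_leq v_gt0 pt_dvd).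
apply: leq_trans (double_exp2_leq_exp3 t_ge2) _.
by rewrite leq_exp2r; have := prime_gt1 p_pr; lia.
Qed.

Lemma H_eq_exact_dvd_exp2 j n :
    0 < n -> (forall d, 2 < d -> ~~ (d ^ tetr 2 j.+2 %| n)) ->
  (H n == j.+3) = (2 ^ tetr 2 j.+2 %| n) && ~~ (2 ^ (tetr 2 j.+2).+1 %| n).
Proof.
move=> n_gt0 no_pow; set a := tetr 2 j.+2.
have log_odd p : prime p -> p != 2 -> logn p n < a.
  move=> p_pr p_ne2; rewrite ltnNge -pfactor_dvdn //; apply: no_pow.
  by have := prime_gt1 p_pr; lia.
have log_lt p : prime p -> logn p n < 2 * a.
  have [->|p_ne2] := eqVneq p 2; last by move/log_odd => /(_ p_ne2); lia.
  by move=> _; rewrite ltnNge -pfactor_dvdn // expnM; apply: no_pow.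
have H_le : H n <= j.+3.
  rewrite leqNgt; apply/negP => /H_geSS[p p_pr /tetr2_leq_of_H_gt].
  by rewrite (tetrS 2 j.+2) -/a; have := double_leq_exp2 a; have := log_lt p p_pr; lia.
have H_ge : (j.+2 < H n) = (logn 2 n == a).
  apply/idP/eqP => [/H_geSS[p p_pr lt_H] | log_eq].
    have [p_eq2|p_ne2] := eqVneq p 2.
      rewrite p_eq2 in lt_H; have := log_lt 2 isT.
      by case: (H_gap lt_H) => [//|]; lia.
    by have := tetr2_leq_of_H_gt lt_H; have := log_odd p p_pr p_ne2; lia.
  by apply/H_geSS; exists 2; rewrite // log_eq H_tetr2.
by rewrite eqn_leq H_le H_ge /= !pfactor_dvdn // -ltnNge ltnS eqn_leq andbC.
Qed.

Lemma H_geSS_logn_congr n g k :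
    (forall p, prime p -> logn p n = logn p g \/ logn p n <= 1 /\ logn p g <= 1) ->
  (k.+2 <= H n) = (k.+2 <= H g).
Proof.
move=> logn_congr; apply/idP/idP => /H_geSS[p p_pr k_lt]; apply/H_geSS; exists p => //;
  by case: (logn_congr p p_pr) k_lt => [-> | [? ?]] //; rewrite H_small.
Qed.

Lemma H_eq_gcd_fact k P n :
    0 < n -> (forall d, P < d -> ~~ (d ^ 2 %| n)) ->
  (H n == k.+2) = (H (gcdn n (P`! ^ (2 * P))) == k.+2).
Proof.
move=> n_gt0 no_sq; set Q := P`! ^ (2 * P).
have Q_gt0 : 0 < Q by rewrite expn_gt0 fact_gt0.
suff agree k' : (k'.+2 <= H n) = (k'.+2 <= H (gcdn n Q)).
  by rewrite !eqn_leq !(leqNgt (H _)) !agree.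
apply: H_geSS_logn_congr => p p_pr; rewrite logn_gcd //.
have [log_le1|log_gt1] := leqP (logn p n) 1; first by right; rewrite geq_min log_le1.
left; apply/esym/minn_idPl.
have p_le : p <= P.
  by rewrite leqNgt; apply: contraL log_gt1 => /no_sq; rewrite pfactor_dvdn // -ltnNge.
have log_lt : logn p n < 2 * P.
  rewrite ltnNge -pfactor_dvdn // mulnC expnM; apply: no_sq.
  by apply: ltn_expl; apply: prime_gt1.
have fact_log : 0 < logn p P`!.
  by rewrite logn_gt0 mem_primes p_pr fact_gt0 dvdn_fact ?prime_gt0.
by rewrite lognX; have := leq_pmulr (2 * P) fact_log; lia.
Qed.

Definition cnt (a : pred nat) (N : nat) : nat := count a (iota 1 N).

Lemma cnt_le N (a : pred nat) : cnt a N <= N.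
Proof. by rewrite /cnt -[X in _ <= X](size_iota 1 N) count_size. Qed.

Lemma cnt_le_predU (a b c : pred nat) N :
  {in iota 1 N, forall n, ~~ c n -> a n = b n} -> cnt a N <= cnt b N + cnt c N.
Proof.
move=> ab_agree; rewrite /cnt -count_predUI; apply: leq_trans (leq_addr _ _).
rewrite (@eq_in_count _ a (fun n => if c n then a n else b n)); last first.
  by move=> n /ab_agree; case: (c n) => // ->.
by apply: sub_count => n /=; case: (c n) => /=; rewrite ?orbT ?orbF.
Qed.

Lemma cnt_predD (a b : pred nat) N :
  subpred b a -> cnt (predD a b) N = cnt a N - cnt b N.
Proof.
move=> sub_ba; rewrite /cnt; elim: (iota 1 N) => //= x s ->.
have := sub_count sub_ba s; case bx: (b x); first by rewrite (sub_ba x bx); lia.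
by case: (a x) => /=; lia.
Qed.

Lemma cnt_dvdn d N : 0 < d -> cnt (dvdn d) N = N %/ d.
Proof.
move=> d_gt0; elim: N => [|N IH]; first by rewrite div0n.
rewrite /cnt -{1}[N.+1]addn1 iotaD count_cat -/(cnt _ N) IH /=.
by rewrite divnS // addn0 add1n addnC.
Qed.

Lemma cnt_add_period (b : pred nat) Q N :
  (forall n, b (n + Q) = b n) -> cnt b (Q + N) = cnt b Q + cnt b N.
Proof.
move=> b_per; rewrite /cnt iotaD count_cat [1 + Q]addnC iotaDl count_map.
by congr (_ + _); apply: eq_count => n /=; rewrite addnC b_per.
Qed.

Lemma cnt_periodic (b : pred nat) Q N :
  (forall n, b (n + Q) = b n) -> cnt b N = N %/ Q * cnt b Q + cnt b (N %% Q).
Proof.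
move=> b_per; rewrite {1}(divn_eq N Q); elim: (N %/ Q) => // q IH.
by rewrite mulSn -addnA cnt_add_period // IH mulSn addnA.
Qed.

Lemma INR_addn m n : INR (m + n) = (INR m + INR n)%R.
Proof. by rewrite -plusE plus_INR. Qed.

Lemma INR_muln m n : INR (m * n) = (INR m * INR n)%R.
Proof. by rewrite -multE mult_INR. Qed.

Lemma INR_expn m n : INR (m ^ n) = (INR m ^ n)%R.
Proof. by rewrite -pow_INR; congr INR; elim: n => // n IH; rewrite expnS IH. Qed.

Lemma INR_leq m n : m <= n -> (INR m <= INR n)%R.
Proof. by move/leP; apply: le_INR. Qed.

Lemma INR_gt0 n : 0 < n -> (0 < INR n)%R.
Proof. by move/ltP; apply: lt_0_INR. Qed.

Lemma INR_divn_le N d : 0 < d -> (INR (N %/ d) <= INR N / INR d)%R.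
Proof.
move=> d_gt0; have d_pos := INR_gt0 d_gt0.
have := INR_leq (leq_divM N d); rewrite INR_muln => le_N.
apply: (Rmult_le_reg_r (INR d)) => //; rewrite /Rdiv Rmult_assoc Rinv_l; lra.
Qed.

Definition sumR (f : nat -> R) (s : seq nat) : R :=
  foldr (fun d acc => f d + acc)%R 0%R s.

Lemma sumR_cons f d s : sumR f (d :: s) = (f d + sumR f s)%R.
Proof. by []. Qed.

Lemma sumR_le f g s :
  (forall d, d \in s -> (f d <= g d)%R) -> (sumR f s <= sumR g s)%R.
Proof.
elim: s => /= [_|d s IH le_fg]; first lra.
apply: Rplus_le_compat; first by apply: le_fg; rewrite mem_head.
by apply: IH => e e_in; apply: le_fg; rewrite in_cons e_in orbT.
Qed.

Lemma sumR_scal c f s : sumR (fun d => c * f d)%R s = (c * sumR f s)%R.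
Proof. by elim: s => /= [|d s ->]; ring. Qed.

Lemma cnt_has_dvd_le (g : nat -> nat) s N :
    (forall d, d \in s -> 0 < g d) ->
  (INR (cnt (fun n => has (fun d => g d %| n) s) N)
     <= INR N * sumR (fun d => / INR (g d)) s)%R.
Proof.
elim: s => [_|d s IH g_gt0] /=.
  by rewrite /cnt (@eq_count _ _ pred0) // count_pred0 /=; lra.
have gd_gt0 : 0 < g d by apply: g_gt0; rewrite mem_head.
have le_cnt : cnt (fun n => (g d %| n) || has (fun d => g d %| n) s) N
    <= cnt (dvdn (g d)) N + cnt (fun n => has (fun d => g d %| n) s) N.
  by apply: cnt_le_predU => n _ /negbTE ->; rewrite orbF.
move/INR_leq: le_cnt; rewrite INR_addn cnt_dvdn //.
have gs_gt0 e : e \in s -> 0 < g e.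
  by move=> e_in; apply: g_gt0; rewrite in_cons e_in orbT.
have := INR_divn_le N gd_gt0; have := IH gs_gt0.
rewrite Rmult_plus_distr_l /Rdiv; lra.
Qed.

Lemma sumR_inv_sqr_le k L :
  0 < k -> (sumR (fun d => / INR (d ^ 2)) (iota k.+1 L) <= / INR k)%R.
Proof.
elim: L k => [|L IH] k k_gt0; have k_pos := INR_gt0 k_gt0.
  by have := Rinv_0_lt_compat _ k_pos; rewrite /=; lra.
rewrite [iota _ _]/= sumR_cons INR_expn S_INR.
have := IH k.+1 isT; rewrite S_INR; set x := INR k in k_pos *.
have telescope : (/ x - (/ (x + 1) ^ 2 + / (x + 1)) = / (x * (x + 1) ^ 2))%R.
  by field; lra.
have : (0 < / (x * (x + 1) ^ 2))%R.
  by apply: Rinv_0_lt_compat; apply: Rmult_lt_0_compat; [lra | apply: pow_lt; lra].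
lra.
Qed.

Lemma exp3_leq_exp4 b : 3 ^ b.+4 <= 6 * 4 ^ b.+2.
Proof. by elim: b => // b IH; rewrite (expnS 3) (expnS 4); lia. Qed.

Lemma sumR_inv_pow_le a L :
  4 <= a -> (sumR (fun d => / INR (d ^ a)) (iota 3 L) <= 3 / 3 ^ a)%R.
Proof.
have INR3 : INR 3 = 3%R by rewrite /=; lra.
case: a => [|[|[|[|b]]]] // _; rewrite -INR3 -(INR_expn 3 b.+4).
set X3 := INR (3 ^ b.+4); set X4 := INR (4 ^ b.+2).
have X3_pos : (0 < X3)%R by apply: INR_gt0; rewrite expn_gt0.
have X4_pos : (0 < X4)%R by apply: INR_gt0; rewrite expn_gt0.
case: L => [|L]; first by have := Rinv_0_lt_compat _ X3_pos; rewrite /= /Rdiv; lra.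
rewrite [iota _ _]/= sumR_cons -/X3.
have tail : (sumR (fun d => / INR (d ^ b.+4)) (iota 4 L) <= / X4 * / 3)%R.
  apply: Rle_trans (_ : sumR (fun d => / X4 * / INR (d ^ 2)) (iota 4 L) <= _)%R.
    apply: sumR_le => d; rewrite mem_iota => /andP[d_ge4 _].
    rewrite -Rinv_mult -INR_muln; apply: Rinv_le_contravar.
      by apply: INR_gt0; rewrite muln_gt0 !expn_gt0; lia.
    apply: INR_leq; rewrite -[b.+4]addn2 expnD leq_mul2r leq_exp2r //; lia.
  rewrite sumR_scal; apply: Rmult_le_compat_l.
    by apply: Rlt_le; apply: Rinv_0_lt_compat.
  by have := sumR_inv_sqr_le L (isT : 0 < 3); rewrite INR3.
have : (/ (6 * X4) <= / X3)%R.
  apply: Rinv_le_contravar => //; rewrite (_ : 6%R = INR 6); last by rewrite /=; lra.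
  by rewrite -INR_muln; apply: INR_leq; apply: exp3_leq_exp4.
have : (/ X4 * / 3 = 2 * / (6 * X4))%R by field; lra.
by rewrite INR3 /Rdiv; lra.
Qed.

Lemma eventually_div_lt K eps :
  (0 <= K)%R -> (0 < eps)%R ->
  exists2 N0, 0 < N0 & forall N, N0 <= N -> (K / INR N < eps)%R.
Proof.
move=> K_ge0 eps_pos; set y := (eps / (K + 1))%R.
have y_pos : (0 < y)%R by apply: Rdiv_lt_0_compat; lra.
have y_K : (y * (K + 1) = eps)%R by rewrite /y; field; lra.
have [N0 [inv_lt /ltP N0_gt0]] := archimed_cor1 y y_pos.
exists N0 => // N le_N; have N0_pos := INR_gt0 N0_gt0.
have inv_le : (/ INR N <= / INR N0)%R.
  by apply: Rinv_le_contravar => //; apply: INR_leq.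
have := Rmult_le_compat_l K _ _ K_ge0 inv_le; rewrite /Rdiv; nra.
Qed.

Lemma cv_of_approx (u : nat -> R) :
    (forall eps, (0 < eps)%R -> exists c K, (0 <= K)%R /\
       forall N, 0 < N -> (Rabs (u N - c) <= eps + K / INR N)%R) ->
  exists D, Un_cv u D.
Proof.
move=> approx; suff [D cv] : {D | Un_cv u D} by exists D.
apply: R_complete => eps eps_pos.
have [c [K [K_ge0 u_near]]] := approx (eps / 4)%R ltac:(lra).
have [N0 N0_gt0 small] := eventually_div_lt K_ge0 (ltac:(lra) : (0 < eps / 4)%R).
exists N0 => n m /leP n_ge /leP m_ge; rewrite /R_dist.
have := u_near n (leq_trans N0_gt0 n_ge); have := u_near m (leq_trans N0_gt0 m_ge).
by have := small n n_ge; have := small m m_ge; split_Rabs; lra.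
Qed.

Lemma Rabs_lim_le (u : nat -> R) D c B K :
    (0 <= K)%R -> Un_cv u D ->
    (forall N, 0 < N -> (Rabs (u N - c) <= B + K / INR N)%R) ->
  (Rabs (D - c) <= B)%R.
Proof.
move=> K_ge0 cv u_near; apply: Rle_plus_epsilon => eps eps_pos.
have [N1 cv1] := cv (eps / 2)%R ltac:(lra).
have [N2 N2_gt0 small] := eventually_div_lt K_ge0 (ltac:(lra) : (0 < eps / 2)%R).
have N1_le : (N1 <= maxn N1 N2)%coq_nat by apply/leP; apply: leq_maxl.
have := cv1 _ N1_le; have := u_near _ (leq_trans N2_gt0 (leq_maxr N1 N2)).
by have := small _ (leq_maxr N1 N2); rewrite /R_dist; split_Rabs; lra.
Qed.

Lemma cnt_ratio_approx (a b c : pred nat) N beta e K :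
    0 < N -> {in iota 1 N, forall n, ~~ c n -> a n = b n} ->
    (INR (cnt c N) <= INR N * e)%R ->
    (Rabs (INR (cnt b N) - INR N * beta) <= K)%R ->
  (Rabs (INR (cnt a N) / INR N - beta) <= e + K / INR N)%R.
Proof.
move=> N_gt0 ab_agree c_small b_near; have N_pos := INR_gt0 N_gt0.
have ba_agree : {in iota 1 N, forall n, ~~ c n -> b n = a n}.
  by move=> n n_in /(ab_agree n n_in).
have := INR_leq (cnt_le_predU ab_agree); have := INR_leq (cnt_le_predU ba_agree).
rewrite !INR_addn => ab_le ba_le.
have -> : (INR (cnt a N) / INR N - beta = (INR (cnt a N) - INR N * beta) * / INR N)%R.
  by field; lra.
have -> : (e + K / INR N = (INR N * e + K) * / INR N)%R by field; lra.
have inv_pos := Rinv_0_lt_compat _ N_pos.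
rewrite Rabs_mult (Rabs_pos_eq (/ INR N)); last lra.
by apply: Rmult_le_compat_r; [lra | split_Rabs; lra].
Qed.

Lemma cnt_periodic_approx (b : pred nat) Q N :
    0 < Q -> (forall n, b (n + Q) = b n) ->
  (Rabs (INR (cnt b N) - INR N * (INR (cnt b Q) / INR Q)) <= INR Q)%R.
Proof.
move=> Q_gt0 b_per; have Q_pos := INR_gt0 Q_gt0.
rewrite (@cnt_periodic b Q N b_per) {3}(divn_eq N Q) !INR_addn !INR_muln.
have rem_le := INR_leq (cnt_le (N %% Q) b).
have rem_lt := INR_leq (ltnW (ltn_pmod N Q_gt0)).
have per_le := INR_leq (cnt_le Q b); have per_ge := pos_INR (cnt b Q).
have rem_ge := pos_INR (cnt b (N %% Q)); have mod_ge := pos_INR (N %% Q).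
set y := (INR (cnt b Q) / INR Q)%R.
have y_01 : (0 <= y <= 1)%R.
  rewrite /y; split.
    by apply: Rmult_le_pos; [|apply: Rlt_le; apply: Rinv_0_lt_compat].
  by apply: (Rmult_le_reg_r (INR Q)) => //; rewrite /Rdiv Rmult_assoc Rinv_l; lra.
have -> : (INR (N %/ Q) * INR (cnt b Q) + INR (cnt b (N %% Q))
           - (INR (N %/ Q) * INR Q + INR (N %% Q)) * y
          = INR (cnt b (N %% Q)) - INR (N %% Q) * y)%R by rewrite /y; field; lra.
split_Rabs; nra.
Qed.

Lemma density_seq_cv k : exists D, Un_cv (density_seq k.+2) D.
Proof.
apply: cv_of_approx => eps eps_pos.
have [P [inv_P_lt /ltP P_gt0]] := archimed_cor1 eps eps_pos.
set Q := P`! ^ (2 * P); have Q_gt0 : 0 < Q by rewrite expn_gt0 fact_gt0.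
set b := fun n => H (gcdn n Q) == k.+2.
exists (INR (cnt b Q) / INR Q)%R, (INR Q); split=> [|N N_gt0]; first exact: pos_INR.
apply: Rle_trans (_ : _ <= / INR P + INR Q / INR N)%R _; last lra.
apply: (@cnt_ratio_approx _ b (fun n => has (fun d => d ^ 2 %| n) (iota P.+1 N))) => //.
- move=> n; rewrite mem_iota => /andP[n_gt0 n_le] no_sq.
  apply: H_eq_gcd_fact => // d d_gt; apply: contra no_sq => d_sq.
  apply/hasP; exists d => //.
  have : d <= d ^ 2 by rewrite leq_pmulr //; lia.
  by have := dvdn_leq n_gt0 d_sq; rewrite mem_iota; lia.
- apply: Rle_trans (cnt_has_dvd_le _ _) _ => [d|].
    by rewrite mem_iota expn_gt0 => /andP[d_gt _]; lia.
  by apply: Rmult_le_compat_l; [apply: pos_INR | apply: sumR_inv_sqr_le].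
- by apply: cnt_periodic_approx => // n; rewrite /b gcdnC gcdnDr gcdnC.
Qed.

Lemma density_limit_bound j D :
    Un_cv (density_seq j.+3) D ->
  (Rabs (D - / 2 * / INR (tetr 2 j.+3)) <= 3 / 3 ^ tetr 2 j.+2)%R.
Proof.
move=> cv; set a := tetr 2 j.+2; set Q := 2 ^ a.+1.
have a_ge4 : 4 <= a by rewrite /a tetrS -[4]/(2 ^ 2) leq_exp2l // tetr2_ge2.
have Q_gt0 : 0 < Q by rewrite expn_gt0.
have dvd_aQ : 2 ^ a %| Q by rewrite dvdn_exp2l.
set M := predD (dvdn (2 ^ a)) (dvdn Q).
have M_period : cnt M Q = 1.
  rewrite cnt_predD ?cnt_dvdn ?expn_gt0 // ?divnn ?Q_gt0; last first.
    by move=> n /(dvdn_trans dvd_aQ).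
  by rewrite /Q expnS mulnK ?expn_gt0.
have beta_eq : (/ 2 * / INR (tetr 2 j.+3) = INR (cnt M Q) / INR Q)%R.
  have pow_pos : (0 < INR (2 ^ a))%R by apply: INR_gt0; rewrite expn_gt0.
  by rewrite M_period /Q expnS INR_muln (tetrS 2 j.+2) -/a /=; field; lra.
apply: (Rabs_lim_le (pos_INR Q) cv) => N N_gt0; rewrite beta_eq.
apply: (@cnt_ratio_approx _ M (fun n => has (fun d => d ^ a %| n) (iota 3 N))) => //.
- move=> n; rewrite mem_iota => /andP[n_gt0 n_le] no_pow.
  rewrite /M /= H_eq_exact_dvd_exp2 // 1?andbC // => d d_gt2.
  apply: contra no_pow; rewrite -/a => d_pow; apply/hasP; exists d => //.
  have : d <= d ^ a by rewrite -{1}(expn1 d) leq_pexp2l; lia.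
  by have := dvdn_leq n_gt0 d_pow; rewrite mem_iota; lia.
- apply: Rle_trans (cnt_has_dvd_le _ _) _ => [d|].
    by rewrite mem_iota expn_gt0 => /andP[d_gt _]; lia.
  by apply: Rmult_le_compat_l; [apply: pos_INR | apply: sumR_inv_pow_le].
- apply: cnt_periodic_approx => // n.
  by rewrite /M /= (dvdn_addl _ (dvdnn Q)) (dvdn_addl _ dvd_aQ).
Qed.

Theorem lemma6 (m : nat) (hm : 4 <= m) :
  exists D : R,
    Un_cv (density_seq m) D /\
    (Rabs (D - / 2 * / INR (tetr 2 m)) <= 3 / (3 ^ (tetr 2 (m - 1))))%R.
Proof.
case: m hm => [|[|[|[|j]]]] // _; have [D cv] := density_seq_cv j.+2.
by exists D; split => //; rewrite subn1; apply: density_limit_bound.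
Qed.
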